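(* For any $\sigma$-structure $\mathbf D$, the family $\mathcal H_{\mathbf D}=\{\mathbf A\in\mathbb F:\mathbf A\to\mathbf D\}$ is regular.
   Context: Fix a type $\sigma$ (finite set of relation symbols with arities); $\sigma$-structures are finite sets with an $r$-ary relation per symbol of arity $r$; $\mathbf A\to\mathbf D$ means there is a relation-preserving map $V(\mathbf A)\to V(\mathbf D)$. $\mathrm{Inc}(\mathbf A)$ is the bipartite multigraph with parts $V(\mathbf A)$ and the blocks $(R,(x_1,\dots,x_r))$, $(x_1,\dots,x_r)\in R(\mathbf A)$, with one edge joining $x_i$ to the block for each $i$; $\mathbf A$ is a $\sigma$-forest if $\mathrm{Inc}(\mathbf A)$ has no cycles or parallel edges. $\mathbb F$ is the set of isomorphism classes of $\sigma$-forests, $\mathbb F_{\mathrm r}$ that of rooted $\sigma$-forests. $(\mathbf A,a)+(\mathbf B,b)$: disjoint union with $a,b$ identified as new root; $[(\mathbf A,a)]$ forgets the root. $\mathcal O\subseteq\mathbb F$ is regular if there are only finitely many distinct sets $\mathcal O-(\mathbf A,a)=\{(\mathbf B,b)\in\mathbb F_{\mathrm r}:[(\mathbf A,a)+(\mathbf B,b)]\in\mathcal O\}$, $(\mathbf A,a)\in\mathbb F_{\mathrm r}$. *)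

From HB Require Import structures.
From mathcomp Require Import all_boot.
Set Implicit Arguments. Unset Strict Implicit. Unset Printing Implicit Defensive.

Section Structures.
Variables (S : finType) (ar : S -> nat).

Record struct := Struct {
  V : finType;
  rel : forall R : S, (ar R).-tuple V -> bool
}.
Arguments rel : clear implicits.
Arguments V : clear implicits.

Definition hom (A D : struct) : Prop :=
  exists h : V A -> V D,
    forall (R : S) (t : (ar R).-tuple (V A)), rel A R t -> rel D R (map_tuple h t).

Definition blockT (A : struct) := {R : S & (ar R).-tuple (V A)}.
Definition is_block (A : struct) (x : blockT A) : bool := rel A (tag x) (tagged x).

(* Inc(A) has no parallel edges: no block contains a vertex at two positions. *)
Definition no_parallel (A : struct) : Prop :=
  forall (R : S) (t : (ar R).-tuple (V A)), rel A R t -> uniq t.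

(* Inc(A) has a cycle: v_0, B_0, v_1, B_1, ..., v_{k-1}, B_{k-1}, (back to v_0),
   k >= 2, with pairwise distinct vertices v_i, pairwise distinct blocks B_i,
   and v_i, v_{i+1 mod k} both incident to B_i. *)
Definition has_cycle (A : struct) : Prop :=
  exists (k : nat) (vs : 'I_k.+2 -> V A) (bs : 'I_k.+2 -> blockT A),
    [/\ injective vs, injective bs &
        forall i : 'I_k.+2,
          [/\ is_block (bs i), vs i \in (tagged (bs i) : seq _)
            & vs (ordS i) \in (tagged (bs i) : seq _)]].

Definition forest (A : struct) : Prop := no_parallel A /\ ~ has_cycle A.

(* (A,a) + (B,b): disjoint union of A and B with a and b identified (the new
   root is the image of a).  Vertex set: V(A) + (V(B) \ {b}). *)
Definition glue_V (A : struct) (a : V A) (B : struct) (b : V B) : finType :=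
  (V A + {v : V B | v != b})%type.

Definition glue_inB (A : struct) (a : V A) (B : struct) (b : V B)
  (v : V B) : glue_V a b :=
  match insub v with Some w => inr w | None => inl a end.

Definition glue (A : struct) (a : V A) (B : struct) (b : V B) : struct :=
  @Struct (glue_V a b) (fun R t =>
    [exists tA : (ar R).-tuple (V A), (t == map_tuple inl tA) && rel A R tA] ||
    [exists tB : (ar R).-tuple (V B),
        (t == map_tuple (@glue_inB A a B b) tB) && rel B R tB]).

Definition same_residual (O : struct -> Prop)
  (A : struct) (a : V A) (A' : struct) (a' : V A') : Prop :=
  forall (B : struct) (b : V B), forest B -> (O (glue a b) <-> O (glue a' b)).

(* O is regular: the residuals O - (A,a), (A,a) ranging over rooted
   sigma-forests, take only finitely many distinct values, i.e. there is a
   finite list of rooted forests whose residuals exhaust all residuals. *)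
Definition regular (O : struct -> Prop) : Prop :=
  exists (n : nat) (reps : 'I_n -> {A : struct & V A}),
    (forall i, forest (projT1 (reps i))) /\
    forall (A : struct) (a : V A), forest A ->
      exists i, same_residual O a (projT2 (reps i)).

Definition H_D (D : struct) (A : struct) : Prop := forest A /\ hom A D.

End Structures.

From Pilot Require Import Defs.
From mathcomp Require Import all_boot.
From mathcomp Require Import zify boolp.
Set Implicit Arguments. Unset Strict Implicit. Unset Printing Implicit Defensive.

(* The residual of a rooted forest (A, a) in H_D is determined by the set of
   points of D to which a homomorphism A -> D can send a.  Indeed, gluing two
   forests at their roots yields a forest, and the glued structure maps to D
   exactly when the root image sets of the two pieces meet.  As V(D) has only
   finitely many subsets, there are only finitely many residuals. *)

Lemma iter_ordS n (i : 'I_n) m : val (iter m (@ordS n) i) = (i + m) %% n.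
Proof.
elim: m => [|m IH] /=; first by rewrite addn0 modn_small.
by rewrite IH -addn1 modnDml addn1 addnS.
Qed.

Lemma ordS_change n (q : pred 'I_n) i0 j0 :
  q i0 -> ~~ q j0 -> exists i, q i && ~~ q (ordS i).
Proof.
move=> qi0 qj0; apply/existsP; apply: contraNT qj0; rewrite negb_exists => /forallP qS.
have q_iter m : q (iter m (@ordS n) i0).
  by elim: m => //= m IH; move: (qS (iter m (@ordS n) i0)); rewrite IH negbK.
suff <- : iter (j0 + n - i0) (@ordS n) i0 = j0 by [].
apply: val_inj; rewrite iter_ordS.
have lti0 := ltn_ord i0; have ltj0 := ltn_ord j0.
have -> : i0 + (j0 + n - i0) = j0 + n by lia.
by rewrite modnDr modn_small.
Qed.

Section Invariant.
Variables (S : finType) (ar : S -> nat).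
Local Notation struct := (struct ar).

Definition point : struct := @Struct S ar unit (fun _ _ => false).

Lemma forest_point : forest point.
Proof. by split=> // -[k [vs [bs [_ _ /(_ ord0) []]]]]. Qed.

Variables (T : finType) (f : forall {A : struct}, V A -> T).

(* An arbitrary forest stands in for the values of f that no forest attains. *)
Definition invariant_rep (t : T) : {A : struct & V A} :=
  if pselect (exists p : {A : struct & V A}, forest (projT1 p) /\ f (projT2 p) = t)
    is left ex then sval (cid ex) else existT _ point tt.

Lemma forest_invariant_rep t : forest (projT1 (invariant_rep t)).
Proof.
rewrite /invariant_rep; case: pselect => [ex|_]; last exact: forest_point.
by case: cid => p [].
Qed.

Lemma invariant_repK (A : struct) (a : V A) :
  forest A -> f (projT2 (invariant_rep (f a))) = f a.
Proof.
rewrite /invariant_rep => fA; case: pselect => [ex|[]]; first by case: cid => p [].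
by exists (existT _ A a).
Qed.

Lemma regular_of_invariant (O : struct -> Prop) :
  (forall (A A' : struct) (a : V A) (a' : V A'),
     forest A -> forest A' -> f a = f a' -> same_residual O a a') ->
  regular O.
Proof.
move=> fres; exists #|T|, (fun i => invariant_rep (enum_val i)).
split=> [i|A a fA]; first exact: forest_invariant_rep.
exists (enum_rank (f a)); rewrite enum_rankK.
apply: fres => //; first exact: forest_invariant_rep.
by rewrite invariant_repK.
Qed.
End Invariant.

Section Glue.
Variables (S : finType) (ar : S -> nat).
Local Notation rel X R t := (@Defs.rel S ar X R t).

Definition hom_at (X D : struct ar) (x : V X) (d : V D) : Prop :=
  exists2 h : V X -> V D,
    (forall R t, rel X R t -> rel D R (map_tuple h t)) & h x = d.

Variables (A B D : struct ar) (a : V A) (b : V B).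
Local Notation G := (glue a b).

Lemma glue_inB_root : glue_inB a b b = inl a.
Proof. by rewrite /glue_inB insubF // eqxx. Qed.

Definition glue_inA : V A -> V G := inl.
Definition glue_outA (x : V G) : V A := if x is inl y then y else a.
Definition glue_outB (x : V G) : V B := if x is inr w then val w else b.

Lemma glue_inAK : cancel glue_inA glue_outA.
Proof. by []. Qed.

Lemma glue_inBK : cancel (glue_inB a b) glue_outB.
Proof.
by move=> v; rewrite /glue_inB; case: insubP => [w _ <-|] //; rewrite negbK => /eqP ->.
Qed.

Lemma glue_relA R t : rel A R t -> rel G R (map_tuple glue_inA t).
Proof. by move=> r; apply/orP; left; apply/existsP; exists t; rewrite eqxx r. Qed.

Lemma glue_relB R t : rel B R t -> rel G R (map_tuple (glue_inB a b) t).
Proof. by move=> r; apply/orP; right; apply/existsP; exists t; rewrite eqxx r. Qed.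

Lemma map_tuple_comp T1 T2 T3 n (g : T2 -> T3) (h : T1 -> T2) (t : n.-tuple T1) :
  map_tuple g (map_tuple h t) = map_tuple (g \o h) t.
Proof. by apply: val_inj; rewrite /= map_comp. Qed.

Lemma hom_glue : hom G D <-> exists d : V D, hom_at a d /\ hom_at b d.
Proof.
split=> [[h hh]|[d [[hA hA_hom hAa] [hB hB_hom hBb]]]].
  exists (h (glue_inA a)); split.
    by exists (h \o glue_inA) => // R t /glue_relA /hh; rewrite map_tuple_comp.
  exists (h \o glue_inB a b) => [R t /glue_relB /hh|]; first by rewrite map_tuple_comp.
  by rewrite /= glue_inB_root.
pose h (x : V G) := if x is inl y then hA y else hB (glue_outB x).
have hB_factor : h \o glue_inB a b =1 hB.
  move=> v /=; rewrite /glue_inB; case: insubP => [w _ <-|] //=.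
  by rewrite negbK => /eqP ->; rewrite hAa hBb.
exists h => R t /orP[] /existsP [t' /andP [/eqP -> r]].
  by rewrite map_tuple_comp; apply: hA_hom.
rewrite map_tuple_comp (_ : map_tuple _ t' = map_tuple hB t') ?hB_hom //.
by apply: val_inj; apply: eq_map.
Qed.
End Glue.

Section Cycles.
Variables (S : finType) (ar : S -> nat).

Definition inc_cycle (X : struct ar) k (vs : 'I_k.+2 -> V X) (bs : 'I_k.+2 -> blockT X) :=
  [/\ injective vs, injective bs &
      forall i, [/\ is_block (bs i), vs i \in (tagged (bs i) : seq _)
                  & vs (ordS i) \in (tagged (bs i) : seq _)]].

Definition map_block (X Y : struct ar) (e : V X -> V Y) (x : blockT X) : blockT Y :=
  existT _ (tag x) (map_tuple e (tagged x)).

Lemma map_blockK (X Y : struct ar) (e : V X -> V Y) (r : V Y -> V X) :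
  cancel e r -> cancel (map_block e) (map_block r).
Proof.
move=> eK [R t]; rewrite /map_block /= map_tuple_comp; congr existT.
by apply: val_inj; rewrite /= (eq_map eK) map_id.
Qed.

Lemma has_cycle_pullback (X Y : struct ar) (e : V X -> V Y) (r : V Y -> V X) k
    (vs : 'I_k.+2 -> V Y) (bs : 'I_k.+2 -> blockT Y) :
  cancel e r -> inc_cycle vs bs ->
  (forall i, exists2 y : blockT X, is_block y & bs i = map_block e y) ->
  has_cycle X.
Proof.
move=> eK [vs_inj bs_inj vs_bs] bs_im.
have bsK i : map_block e (map_block r (bs i)) = bs i.
  by have [y _ ->] := bs_im i; rewrite (map_blockK eK).
have vsK i : e (r (vs i)) = vs i.
  have [y _ eq_bs] := bs_im i; have [_ vs_in _] := vs_bs i.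
  by move: vs_in; rewrite eq_bs => /mapP [x _ ->]; rewrite eK.
exists k, (fun i => r (vs i)), (fun i => map_block r (bs i)); split.
- by move=> i j /(congr1 e); rewrite /= !vsK => /vs_inj.
- by move=> i j /(congr1 (map_block e)); rewrite /= !bsK => /bs_inj.
move=> i; have [y y_block eq_bs] := bs_im i; have [_] := vs_bs i.
rewrite eq_bs (map_blockK eK) -(vsK i) -(vsK (ordS i)) !(mem_map (can_inj eK)).
by rewrite !eK.
Qed.
End Cycles.

Section GlueForest.
Variables (S : finType) (ar : S -> nat).
Local Notation rel X R t := (@Defs.rel S ar X R t).
Variables (A B : struct ar) (a : V A) (b : V B).
Local Notation G := (glue a b).

Definition glue_blockA (x : blockT G) : bool :=
  [exists t : (ar (tag x)).-tuple (V A),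
     (tagged x == map_tuple (glue_inA a b) t) && rel A (tag x) t].
Definition glue_blockB (x : blockT G) : bool :=
  [exists t : (ar (tag x)).-tuple (V B),
     (tagged x == map_tuple (glue_inB a b) t) && rel B (tag x) t].

Lemma is_block_glue x : is_block x = glue_blockA x || glue_blockB x.
Proof. by []. Qed.

Lemma glue_blockA_image x :
  glue_blockA x -> exists2 y : blockT A, is_block y & x = map_block (glue_inA a b) y.
Proof. by case: x => R t /existsP [tA /andP [/eqP /= -> r]]; exists (existT _ R tA). Qed.

Lemma glue_blockB_image x :
  glue_blockB x ->
  exists2 y : blockT B, is_block y & x = map_block (Y := G) (glue_inB a b) y.
Proof. by case: x => R t /existsP [tB /andP [/eqP /= -> r]]; exists (existT _ R tB). Qed.

Lemma glue_blocks_meet_at_root v x y : glue_blockA x -> glue_blockB y ->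
  v \in (tagged x : seq _) -> v \in (tagged y : seq _) -> v = inl a.
Proof.
move=> /glue_blockA_image [x' _ ->] /glue_blockB_image [y' _ ->] /mapP [u _ ->] /mapP [w _].
by rewrite /glue_inB; case: insubP.
Qed.

(* A cycle changing sides would pass from A to B and back from B to A, both
   times through the root, which contradicts injectivity of its vertices. *)
Lemma inc_cycle_glue_one_side k (vs : 'I_k.+2 -> V G) bs : inc_cycle vs bs ->
  (forall i, glue_blockA (bs i)) \/ (forall i, glue_blockB (bs i)).
Proof.
move=> [vs_inj _ vs_bs].
have notA_B i : ~~ glue_blockA (bs i) -> glue_blockB (bs i).
  by have [] := vs_bs i; rewrite is_block_glue => /orP [->|].
have [allA|] := boolP [forall i, glue_blockA (bs i)]; first by left; apply/forallP.
rewrite negb_forall => /existsP [j nAj]; right=> i; apply: (notA_B); apply/negP => Ai.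
have [i1 /andP [Ai1 nAi1]] := ordS_change (q := fun i => glue_blockA (bs i)) Ai nAj.
have [i2 /andP [nAi2 /negPn Ai2]] :=
  ordS_change (q := fun i => ~~ glue_blockA (bs i)) nAj (introT negPn Ai).
have root1 : vs (ordS i1) = inl a.
  have [_ _ in1] := vs_bs i1; have [_ in2 _] := vs_bs (ordS i1).
  exact: glue_blocks_meet_at_root Ai1 (notA_B _ nAi1) in1 in2.
have root2 : vs (ordS i2) = inl a.
  have [_ _ in1] := vs_bs i2; have [_ in2 _] := vs_bs (ordS i2).
  exact: glue_blocks_meet_at_root Ai2 (notA_B _ nAi2) in2 in1.
have /vs_inj/ordS_inj eq_i : vs (ordS i1) = vs (ordS i2) by rewrite root1 root2.
by move: nAi2; rewrite -eq_i Ai1.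
Qed.

Lemma no_parallel_glue : no_parallel A -> no_parallel B -> no_parallel G.
Proof.
move=> npA npB R t /orP[] /existsP [t' /andP [/eqP -> r]] /=.
  by rewrite map_inj_uniq ?npA // => x y [].
by rewrite map_inj_uniq ?npB //; exact: (can_inj (@glue_inBK _ _ A B a b)).
Qed.

Lemma has_cycle_glue : has_cycle G -> has_cycle A \/ has_cycle B.
Proof.
move=> [k [vs [bs cyc]]].
have [allA|allB] := inc_cycle_glue_one_side cyc; [left|right].
  apply: (has_cycle_pullback (e := glue_inA a b) (glue_inAK a b) cyc) => i.
  exact: glue_blockA_image (allA i).
apply: (has_cycle_pullback (Y := G) (e := glue_inB a b) (glue_inBK a b) cyc) => i.
exact: glue_blockB_image (allB i).
Qed.

Lemma forest_glue : forest A -> forest B -> forest G.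
Proof.
move=> [npA ncA] [npB ncB]; split; first exact: no_parallel_glue.
by case/has_cycle_glue.
Qed.
End GlueForest.

Section HomImage.
Variables (S : finType) (ar : S -> nat) (D : struct ar).

Definition hom_image (X : struct ar) (x : V X) : {set V D} :=
  [set d | `[< hom_at x d >]].

Lemma H_D_glue (A B : struct ar) (a : V A) (b : V B) : forest A -> forest B ->
  H_D D (glue a b) <-> hom_image a :&: hom_image b != set0.
Proof.
move=> fA fB; rewrite /H_D hom_glue; split.
  move=> [_ [d [ad bd]]]; apply/set0Pn; exists d.
  by rewrite !inE; apply/andP; split; apply/asboolP.
move=> /set0Pn [d]; rewrite !inE => /andP [/asboolP ad /asboolP bd].
by split; [exact: forest_glue | exists d].
Qed.
End HomImage.

Theorem lemma3p3 (S : finType) (ar : S -> nat) (D : struct ar) :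
  regular (@H_D S ar D).
Proof.
apply: (regular_of_invariant (f := fun X x => hom_image D x)).
move=> A A' a a' fA fA' eq_im B b fB.
by rewrite !H_D_glue // eq_im.
Qed.
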